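(* Let $\mathcal O$ be the ring of integers of a finite extension of $\mathbb{Q}_p$ whose maximal ideal $\mathfrak m$ is a divided-power ideal, with residue field $\mathbb F$. Let $P,Q\in\mathcal O[X]$ be monic polynomials with $\bar P=\bar Q$ in $\mathbb F[X]$. Then for every $n\ge1$ and every symmetric function $f\in\Lambda$, $f(P_n)\equiv f(Q_n)\pmod{n\mathfrak m}$. In particular $p_n(P)\equiv p_n(Q)\pmod{n\mathfrak m}$ for all $n\ge1$.
   Context: $\bar P$ denotes reduction modulo $\mathfrak m$. An ideal $\mathfrak a$ of a torsion-free $\mathbb{Z}_{(p)}$-algebra $A$ is a divided-power ideal if $a^p\in p\,\mathfrak a$ for all $a\in\mathfrak a$. If $P$ has roots $\alpha_1,\dots,\alpha_d$ (with multiplicity) in an extension of $\mathcal O$, then $P_n:=\prod_{i=1}^d(X-\alpha_i^n)\in\mathcal O[X]$, and similarly $Q_n$. $\Lambda=\mathbb{Z}[e_1,e_2,\dots]$ is the ring of integral symmetric functions; for monic $R=X^d+a_1X^{d-1}+\dots+a_d$, $e_n(R)=(-1)^na_n$ for $1\le n\le d$, $e_n(R)=0$ for $n>d$, and $f(R)$ is obtained by writing $f$ as an integer polynomial in the $e_n$ and substituting $e_n(R)$ (equivalently, evaluating $f$ at the roots of $R$, padded by zeros). $p_n(P)=\sum_i\alpha_i^n$. *)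

From HB Require Import structures.
From mathcomp Require Import all_boot all_order all_algebra.
From mathcomp Require Import mpoly.
Set Implicit Arguments. Unset Strict Implicit. Unset Printing Implicit Defensive.
Import Order.TTheory GRing.Theory Num.Theory.
Local Open Scope ring_scope.

Definition dvdO {O : comNzRingType} (a b : O) : Prop := exists c : O, b = a * c.

(* [is_padic_int_ring p O pi]: O is a complete discrete valuation ring of
   characteristic 0 with uniformizer pi, whose residue field O/(pi) is finite
   of characteristic p.  These are exactly the rings of integers of finite
   extensions of Q_p. *)
Definition is_padic_int_ring (p : nat) (O : idomainType) (pi : O) : Prop :=
  [/\
      (forall k : nat, k%:R = 0 :> O -> k = 0%N),
      (* DVR with uniformizer pi *)
      pi != 0 /\ pi \notin GRing.unit,
      (forall x : O, x != 0 ->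
         exists (u : O) (k : nat), u \in GRing.unit /\ x = u * pi ^+ k),
      (* residue field is finite and of characteristic p *)
      dvdO pi (p%:R) /\
        (exists s : seq O, forall x : O, exists2 y, y \in s & dvdO pi (x - y))
    & (* complete for the pi-adic topology *)
      (forall x : nat -> O, (forall k, dvdO (pi ^+ k) (x k.+1 - x k)) ->
         exists l : O, forall k, dvdO (pi ^+ k) (l - x k))].

Definition in_m {O : idomainType} (pi : O) (x : O) : Prop := dvdO pi x.

Definition in_nm {O : idomainType} (pi : O) (n : nat) (x : O) : Prop :=
  exists2 c : O, in_m pi c & x = n%:R * c.

(* m is a divided-power ideal: a^p \in p m for all a \in m *)
Definition dp_ideal {O : idomainType} (p : nat) (pi : O) : Prop :=
  forall a : O, in_m pi a -> in_nm pi p (a ^+ p).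

(* e_k(R) for R = X^d + a_1 X^(d-1) + ... + a_d monic:
   (-1)^k a_k for 1 <= k <= d, and 0 for k > d. *)
Definition esym_poly {O : comNzRingType} (R : {poly O}) (k : nat) : O :=
  if (k <= (size R).-1)%N then (-1) ^+ k * R`_((size R).-1 - k) else 0.

(* A symmetric function f in Lambda = Z[e_1, e_2, ...] is written as an
   integer polynomial g in finitely many variables, variable i standing for
   e_(i+1).  f(R) := g(e_1(R), ..., e_m(R)). *)
Definition symf_eval {O : comNzRingType} (m : nat) (g : {mpoly int[m]})
  (R : {poly O}) : O :=
  mmap (fun z : int => z%:~R) (fun i : 'I_m => esym_poly R i.+1) g.

From HB Require Import structures.
From mathcomp Require Import all_boot all_order all_algebra.
From mathcomp Require Import mpoly ring perm.
Set Implicit Arguments. Unset Strict Implicit. Unset Printing Implicit Defensive.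
Import Order.TTheory GRing.Theory Num.Theory.
Local Open Scope ring_scope.

(* The l-th power map is additive modulo l, so for a prime l the elementary
   symmetric polynomials satisfy e_k(x^l) = e_k(x)^l + l K_k(e_1(x), ..., e_d(x))
   with K_k integral.  Hence the polynomial P_l whose roots are the l-th powers
   of those of P has the coefficients e_k(P)^l + l K_k(e(P)), which lie in O.
   If x = y modulo c m then x^l = y^l modulo l c m: for l = p because m has
   divided powers, for l <> p because l is a unit of O.  So P = Q modulo c m
   implies P_l = Q_l modulo l c m, and peeling off the prime factors of n gives
   P_n = Q_n modulo n m coefficientwise.  Every f in Lambda is an integral
   polynomial in these coefficients, and p_n = e_1(P_n). *)

Lemma exprD_prime (R : comNzRingType) (l : nat) (x y : R) : prime l ->
  exists w : R, (x + y) ^+ l = x ^+ l + y ^+ l + l%:R * (y * w).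
Proof.
case: l => [|[|l]] // pl.
exists (\sum_(i < l.+1) x ^+ (l.+2 - i.+1) * y ^+ i *+ ('C(l.+2, i.+1) %/ l.+2)).
rewrite exprDn big_ord_recl big_ord_recr /= subn0 subnn bin0 binn !mulr1n.
rewrite expr0 mulr1 mul1r -addrA /bump leq0n add1n; congr (_ + _).
rewrite addrC; congr (_ + _); rewrite !mulr_sumr; apply: eq_bigr => i _.
rewrite leq0n add1n.
have l_dvd_bin : (l.+2 %| 'C(l.+2, i.+1))%N by rewrite prime_dvd_bin //= ltnS.
rewrite -{1}(divnK l_dvd_bin) mulrnA -[_ *+ l.+2]mulr_natl; congr (_ * _).
by rewrite exprS mulrCA mulrnAr.
Qed.

Lemma sum_expr_prime (R : comNzRingType) (l : nat) (I : Type) (r : seq I)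
  (P : pred I) (F : I -> R) : prime l ->
  exists w : R, (\sum_(i <- r | P i) F i) ^+ l
                = \sum_(i <- r | P i) F i ^+ l + l%:R * w.
Proof.
move=> pl; elim: r => [|i r [w IH]].
  by exists 0; rewrite !big_nil expr0n mulr0 addr0 gtn_eqF ?prime_gt0.
rewrite !big_cons; case: (P i); last by exists w.
have [v ->] := exprD_prime (F i) (\sum_(j <- r | P j) F j) pl.
by exists (w + (\sum_(j <- r | P j) F j) * v); rewrite IH; ring.
Qed.

Lemma msymXU (n : nat) (R : comNzRingType) (s : 'S_n) (i : 'I_n) :
  msym s ('X_i : {mpoly R[n]}) = 'X_(s i).
Proof. by rewrite /msym mmapX mmap1U. Qed.

Section MesymFrobenius.
Variables (R : idomainType) (d l : nat).
Hypothesis l_prime : prime l.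
Hypothesis l_neq0 : (l%:R : R) != 0.

Definition Xpow : d.-tuple {mpoly R[d]} := [tuple 'X_i ^+ l | i < d].
Definition mesyms : d.-tuple {mpoly R[d]} := [tuple mesym d R i.+1 | i < d].

Lemma mesym_comp_Xpow_sym k : mesym d R k \mPo Xpow \is symmetric.
Proof.
apply: msym_comp_poly (mesym_sym _ _ _) _ => s.
have -> : [tuple msym s Xpow`_i | i < d] = [tuple 'X_(s i) ^+ l | i < d].
  apply: eq_from_tnth => i.
  by rewrite !tnth_mktuple -tnth_nth tnth_mktuple rmorphXn /= msymXU.
rewrite /Xpow /= (@map_comp _ _ _ (fun j => 'X_j ^+ l) s); apply: perm_map.
apply: uniq_perm; first exact: enum_uniq.
  by rewrite (map_inj_uniq (@perm_inj _ s)) enum_uniq.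
by move=> i; rewrite mem_enum -[i](permKV s) map_f ?mem_enum.
Qed.

Lemma mesym_comp_Xpow k : exists K : {mpoly R[d]},
  mesym d R k \mPo Xpow = mesym d R k ^+ l + l%:R * (K \mPo mesyms).
Proof.
have [w defect] :
    exists w, mesym d R k \mPo Xpow = mesym d R k ^+ l + l%:R * w.
  have [v ->] := sum_expr_prime (index_enum {set 'I_d}) (fun h => #|h| == k)
    (fun h => \prod_(i in h) ('X_i : {mpoly R[d]})) l_prime.
  exists (- v); rewrite /mesym rmorph_sum mulrN addrK; apply: eq_bigr => h _.
  rewrite rmorph_prod -prodrXl; apply: eq_bigr => i _.
  by have := comp_mpolyXU i Xpow; rewrite -tnth_nth tnth_mktuple.
have w_sym : w \is symmetric.
  have l_sym : (l%:R : {mpoly R[d]}) \is symmetric by apply: rpred_nat.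
  have l_mpoly_neq0 : (l%:R : {mpoly R[d]}) != 0.
    by rewrite -(rmorph_nat (@mpolyC d R)) mpolyC_eq0.
  apply: (msymMK l_mpoly_neq0 l_sym).
  rewrite -[_ * w](addKr (mesym d R k ^+ l)) -defect.
  by rewrite rpredD ?rpredN ?rpredX ?mesym_sym ?mesym_comp_Xpow_sym.
have [K [defw _]] := sym_fundamental w_sym.
by exists K; rewrite defw.
Qed.

End MesymFrobenius.

Section CongruenceModulo.
Variables (OK : idomainType) (pi : OK).

(* x lies in c m; [in_nm pi n] unfolds to [in_cm pi n%:R]. *)
Definition in_cm (c x : OK) : Prop := exists2 y, in_m pi y & x = c * y.

Lemma in_mMl x r : in_m pi x -> in_m pi (r * x).
Proof. by move=> [a ->]; exists (r * a); rewrite mulrCA. Qed.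

Lemma in_mMr x r : in_m pi x -> in_m pi (x * r).
Proof. by rewrite mulrC; apply: in_mMl. Qed.

Lemma in_mD x y : in_m pi x -> in_m pi y -> in_m pi (x + y).
Proof. by move=> [a ->] [b ->]; exists (a + b); rewrite mulrDr. Qed.

Lemma in_cm0 c : in_cm c 0.
Proof. by exists 0; [exists 0 |]; rewrite mulr0. Qed.

Lemma in_cmD c x y : in_cm c x -> in_cm c y -> in_cm c (x + y).
Proof.
by move=> [a ma ->] [b mb ->]; exists (a + b); [apply: in_mD | rewrite mulrDr].
Qed.

Lemma in_cmMl c x r : in_cm c x -> in_cm c (r * x).
Proof.
by move=> [a ma ->]; exists (r * a); [apply: in_mMl | rewrite mulrCA].
Qed.

Lemma in_cm_mul2l c x r : in_cm c x -> in_cm (r * c) (r * x).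
Proof. by move=> [a ma ->]; exists a; rewrite // mulrA. Qed.

Lemma in_cm_mulB c x y x' y' : in_cm c (x - y) -> in_cm c (x' - y') ->
  in_cm c (x * x' - y * y').
Proof.
have -> : x * x' - y * y' = x' * (x - y) + y * (x' - y') by ring.
by move=> cxy cxy'; apply: in_cmD; apply: in_cmMl.
Qed.

Lemma in_cm_expB c x y n : in_cm c (x - y) -> in_cm c (x ^+ n - y ^+ n).
Proof.
move=> cxy; elim: n => [|n IH]; first by rewrite !expr0 subrr; apply: in_cm0.
by rewrite !exprS; apply: in_cm_mulB.
Qed.

Lemma in_cm_mmapB c n (T : nzRingType) (f : T -> OK) (u v : 'I_n -> OK)
  (q : {mpoly T[n]}) :
  (forall i, in_cm c (u i - v i)) -> in_cm c (mmap f u q - mmap f v q).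
Proof.
move=> cuv; pose cong x y := in_cm c (x - y).
have cong_refl x : cong x x by rewrite /cong subrr; apply: in_cm0.
apply: (big_ind2 cong) => // [x1 x2 y1 y2 c1 c2 | m _].
  by rewrite /cong opprD addrACA; apply: in_cmD.
apply: in_cm_mulB; first exact: cong_refl.
rewrite /mmap1; apply: (big_ind2 cong) => // *; first exact: in_cm_mulB.
exact: in_cm_expB.
Qed.

Lemma in_cm_esym_poly c (P Q : {poly OK}) k : size P = size Q ->
  (forall i, in_cm c (P`_i - Q`_i)) -> in_cm c (esym_poly P k - esym_poly Q k).
Proof.
rewrite /esym_poly => <- cPQ; case: ifP => _; first by rewrite -mulrBr; apply: in_cmMl.
by rewrite subrr; apply: in_cm0.
Qed.

Lemma in_cm_symf_eval c (P Q : {poly OK}) m (f : {mpoly int[m]}) :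
  size P = size Q -> (forall i, in_cm c (P`_i - Q`_i)) ->
  in_cm c (symf_eval f P - symf_eval f Q).
Proof. by move=> sPQ cPQ; apply: in_cm_mmapB => i; apply: in_cm_esym_poly. Qed.

End CongruenceModulo.

Section PadicIntegers.
Variables (p : nat) (OK : idomainType) (pi : OK).
Hypothesis p_prime : prime p.
Hypothesis padicO : is_padic_int_ring p pi.
Hypothesis dpO : dp_ideal p pi.

Lemma natr_neq0 k : (0 < k)%N -> k%:R != 0 :> OK.
Proof. by case: padicO => char0 _ _ _ _; apply: contraTneq => /char0 ->. Qed.

Lemma in_m1F : ~ in_m pi 1.
Proof.
case: padicO => _ [_ pi_nunit] _ _ _ [c pic]; move/negP: pi_nunit; apply.
by apply/unitrP; exists c; rewrite mulrC -pic.
Qed.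

Lemma in_m_natr_coprime k : coprime k p -> ~ in_m pi k%:R.
Proof.
move=> kp mk; apply: in_m1F; case: padicO => _ _ _ [mp _] _.
have [u [v uv]] := Bezoutz k p.
have -> : 1 = u%:~R * k%:R + v%:~R * p%:R :> OK.
  by rewrite !pmulrn -!intrM -intrD uv /gcdz /= (eqP kp).
by apply: in_mD; apply: in_mMl.
Qed.

Lemma unit_natr_prime l : prime l -> l != p -> (l%:R : OK) \is a GRing.unit.
Proof.
move=> l_prime lp; case: padicO => _ _ val_dec _ _.
have [u [[|k] [u_unit def_l]]] := val_dec _ (natr_neq0 (prime_gt0 l_prime)).
  by rewrite def_l expr0 mulr1.
have lp_coprime : coprime l p by rewrite prime_coprime // dvdn_prime2.
exfalso; apply: (in_m_natr_coprime lp_coprime); rewrite def_l exprS.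
by apply: in_mMl; exists (pi ^+ k).
Qed.

Lemma in_cm_expB_prime l c x y : prime l ->
  in_cm pi c (x - y) -> in_cm pi (l%:R * c) (x ^+ l - y ^+ l).
Proof.
move=> l_prime [z mz def_xy].
have -> : x = y + c * z by rewrite -def_xy addrC subrK.
have [w ->] := exprD_prime y (c * z) l_prime.
have -> : y ^+ l + (c * z) ^+ l + l%:R * (c * z * w) - y ^+ l
        = (c * z) ^+ l + l%:R * c * (z * w) by ring.
apply: in_cmD; last by exists (z * w); [apply: in_mMr | ].
case: (eqVneq l p) => [-> | lp].
  have [t mt def_zp] := dpO mz; exists (c ^+ p.-1 * t); first exact: in_mMl.
  rewrite exprMn def_zp.
  have -> : c ^+ p = c * c ^+ p.-1 by rewrite -exprS prednK ?prime_gt0.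
  by ring.
have l_unit := unit_natr_prime l_prime lp.
exists (z * ((l%:R)^-1 * (c * z) ^+ l.-1)); first exact: in_mMr.
have -> : (c * z) ^+ l = c * z * (c * z) ^+ l.-1.
  by rewrite -exprS prednK ?prime_gt0.
(* [ring] does not handle inverses in a unit ring, so l^-1 is abstracted. *)
by rewrite -[LHS]mul1r -{1}(mulVr l_unit); set u := _^-1; ring.
Qed.

Lemma size_monic_in_m (P Q : {poly OK}) : P \is monic -> Q \is monic ->
  (forall i, in_m pi (P`_i - Q`_i)) -> size P = size Q.
Proof.
have lt_size (R S : {poly OK}) : R \is monic ->
    (forall i, in_m pi (R`_i - S`_i)) -> ~ (size S < size R)%N.
  move=> mR mRS lt_SR; apply: in_m1F; have := mRS (size R).-1.
  rewrite -lead_coefE (monicP mR) nth_default ?subr0 //.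
  by rewrite -ltnS prednK // (leq_ltn_trans _ lt_SR).
move=> mP mQ mPQ; have mQP i : in_m pi (Q`_i - P`_i).
  by rewrite -opprB -mulN1r; exact: in_mMl (mPQ i).
by case: (ltngtP (size P) (size Q)) => //
  [/(lt_size _ _ mQ mQP) | /(lt_size _ _ mP mPQ)].
Qed.

End PadicIntegers.

Section MmapTheory.
Variables (R : nzRingType) (S : comNzRingType) (f : {rmorphism R -> S}).

Lemma eq_mmap n (u v : 'I_n -> S) : u =1 v -> mmap f u =1 mmap f v.
Proof. by move=> uv q; apply: eq_bigr => m _; rewrite (mmap1_eq m uv). Qed.

Lemma mmap_comp n k (v : 'I_n -> S) (q : {mpoly R[k]})
  (lq : k.-tuple {mpoly R[n]}) :
  mmap f v (q \mPo lq) = mmap f (fun i => mmap f v (tnth lq i)) q.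
Proof.
rewrite comp_mpolyE raddf_sum /= [RHS]/mmap; apply: eq_bigr => m _.
rewrite mmapZ rmorph_prod; congr (_ * _).
by apply: eq_bigr => i _; rewrite rmorphXn.
Qed.

Lemma mmap_mesym n k (v : 'I_n -> S) :
  mmap f v (mesym n R k) = \sum_(h : {set 'I_n} | #|h| == k) \prod_(i in h) v i.
Proof.
rewrite /mesym rmorph_sum; apply: eq_bigr => h _.
by rewrite rmorph_prod; apply: eq_bigr => i _ /=; rewrite mmapX mmap1U.
Qed.

Lemma coef_prod_XsubC_mesym n (ps : seq S) (v : 'I_n -> S) k :
  size ps = n -> (forall i : 'I_n, ps`_i = v i) -> (k <= n)%N ->
  (\prod_(a <- ps) ('X - a%:P))`_(n - k) = (-1) ^+ k * mmap f v (mesym n R k).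
Proof.
move=> size_ps ps_v le_k; subst n.
rewrite coef_prod_XsubC ?leq_subr // subKn // mmap_mesym.
by congr (_ * _); apply: eq_bigr => h _; apply: eq_bigr => i _.
Qed.

End MmapTheory.

Lemma mmap_meval (R S : comNzRingType) (f : {rmorphism R -> S}) n
  (u : 'I_n -> R) (q : {mpoly R[n]}) : mmap f (f \o u) q = f q.@[u].
Proof.
rewrite /meval /mmap rmorph_sum; apply: eq_bigr => m _.
rewrite rmorphM rmorph_prod /mmap1; congr (_ * _).
by apply: eq_bigr => i _; rewrite rmorphXn.
Qed.

Section FrobeniusLift.
Variables (OK : idomainType) (l : nat).
Hypothesis l_prime : prime l.
Hypothesis l_neq0 : (l%:R : OK) != 0.

Lemma exists_frobK d k : exists K : {mpoly OK[d]},
  mesym d OK k \mPo Xpow OK d l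
    == mesym d OK k ^+ l + l%:R * (K \mPo mesyms OK d).
Proof.
by have [K defK] := mesym_comp_Xpow d l_prime l_neq0 k; exists K; apply/eqP.
Qed.

Definition frobK d k : {mpoly OK[d]} := xchoose (exists_frobK d k).

Lemma frobKP d k : mesym d OK k \mPo Xpow OK d l
  = mesym d OK k ^+ l + l%:R * (frobK d k \mPo mesyms OK d).
Proof. exact/eqP/(xchooseP (exists_frobK d k)). Qed.

(* [esymc P d k] is e_k of the roots of P when P is monic of degree d. *)
Definition esymc (P : {poly OK}) d k := (-1) ^+ k * P`_(d - k).

Definition esymc_frob (P : {poly OK}) d k :=
  esymc P d k ^+ l + l%:R * (frobK d k).@[fun i : 'I_d => esymc P d i.+1].

(* P_l: its roots are the l-th powers of those of P (lemma [map_poly_frob]). *)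
Definition poly_frob (P : {poly OK}) d :=
  \poly_(j < d.+1) ((-1) ^+ (d - j) * esymc_frob P d (d - j)).

Lemma map_poly_frob (L : comNzRingType) (iota : {rmorphism OK -> L}) P alpha :
  map_poly iota P = \prod_(a <- alpha) ('X - a%:P) ->
  map_poly iota (poly_frob P (size alpha))
    = \prod_(a <- alpha) ('X - (a ^+ l)%:P).
Proof.
move=> defP; set d := size alpha; pose v i := alpha`_(@nat_of_ord d i).
have esymcE k : (k <= d)%N -> iota (esymc P d k) = mmap iota v (mesym d OK k).
  move=> le_kd; rewrite rmorphM rmorph_sign -coef_map defP.
  by rewrite (coef_prod_XsubC_mesym iota (v := v)) // signrMK.
have esymc_frobE k : (k <= d)%N ->
    mmap iota (fun i => v i ^+ l) (mesym d OK k) = iota (esymc_frob P d k).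
  move=> le_kd; transitivity (mmap iota v (mesym d OK k \mPo Xpow OK d l)).
    rewrite (mmap_comp iota); apply: eq_mmap => i.
    by rewrite tnth_mktuple rmorphXn /= mmapX mmap1U.
  rewrite frobKP rmorphD rmorphXn rmorphM rmorph_nat /= (mmap_comp iota).
  rewrite -esymcE // /esymc_frob rmorphD rmorphXn (rmorphM iota l%:R).
  rewrite rmorph_nat -mmap_meval; congr (_ + _ * _).
  by apply: eq_mmap => i; rewrite tnth_mktuple /= esymcE.
rewrite -(big_map (fun a => a ^+ l) xpredT (fun a => 'X - a%:P)).
apply/polyP => j; rewrite coef_map /= coef_poly; case: ltnP => [lt_jd | le_dj].
  set k := (d - j)%N; have -> : j = (d - k)%N by rewrite /k subKn // -ltnS.
  rewrite rmorphM rmorph_sign -esymc_frobE ?leq_subr //.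
  rewrite (coef_prod_XsubC_mesym iota (v := fun i => v i ^+ l)) ?leq_subr //.
    by rewrite size_map.
  by move=> i; rewrite (nth_map 0).
by rewrite rmorph0 nth_default // size_prod_XsubC size_map.
Qed.

Lemma map_poly_frob_expr (L : comNzRingType) (iota : {rmorphism OK -> L})
  P alpha n : map_poly iota P = \prod_(a <- alpha) ('X - (a ^+ n)%:P) ->
  map_poly iota (poly_frob P (size alpha))
    = \prod_(a <- alpha) ('X - (a ^+ (n * l))%:P).
Proof.
rewrite -(big_map (fun a => a ^+ n) xpredT (fun a => 'X - a%:P)).
move/map_poly_frob.
by rewrite size_map big_map; under eq_bigr do rewrite -exprM.
Qed.

End FrobeniusLift.

Section PowerPolynomials.
Variables (p : nat) (OK : idomainType) (pi : OK).
Hypothesis p_prime : prime p.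
Hypothesis padicO : is_padic_int_ring p pi.
Hypothesis dpO : dp_ideal p pi.

Lemma in_cm_poly_frob l (l_prime : prime l) (l_neq0 : (l%:R : OK) != 0) c
  (P Q : {poly OK}) d : (forall i, in_cm pi c (P`_i - Q`_i)) -> forall j,
  in_cm pi (l%:R * c)
    ((poly_frob l_prime l_neq0 P d)`_j - (poly_frob l_prime l_neq0 Q d)`_j).
Proof.
move=> cPQ j; rewrite !coef_poly; case: ifP => _; last first.
  by rewrite subrr; apply: in_cm0.
rewrite -mulrBr; apply: in_cmMl; rewrite /esymc_frob opprD addrACA -mulrBr.
have cPQ_esymc k : in_cm pi c (esymc P d k - esymc Q d k).
  by rewrite -mulrBr; apply: in_cmMl.
apply: in_cmD.
  exact: (in_cm_expB_prime p_prime padicO dpO l_prime (cPQ_esymc _)).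
by apply: (@in_cm_mul2l _ pi c _ l%:R); apply: in_cm_mmapB.
Qed.

Variables (L : comNzRingType) (iota : {rmorphism OK -> L}).

Lemma exists_power_polys_in_cm (P Q : {poly OK}) (alpha beta : seq L) :
  size alpha = size beta ->
  map_poly iota P = \prod_(a <- alpha) ('X - a%:P) ->
  map_poly iota Q = \prod_(b <- beta) ('X - b%:P) ->
  (forall i, in_m pi (P`_i - Q`_i)) ->
  forall n, (0 < n)%N -> exists Pn Qn : {poly OK},
   [/\ map_poly iota Pn = \prod_(a <- alpha) ('X - (a ^+ n)%:P),
       map_poly iota Qn = \prod_(b <- beta) ('X - (b ^+ n)%:P)
     & forall i, in_cm pi n%:R (Pn`_i - Qn`_i)].
Proof.
move=> size_ab defP defQ mPQ; elim/ltn_ind => n IH n_gt0.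
case: (ltngtP n 1) => [| n_gt1 | ->]; first by case: n n_gt0 {IH}.
  have l_prime := pdiv_prime n_gt1; set l := pdiv n in l_prime.
  have def_n : n = (n %/ l * l)%N by rewrite divnK // pdiv_dvd.
  have [||Pm [Qm [defPm defQm cPQm]]] := IH (n %/ l)%N.
  - by rewrite ltn_Pdiv // prime_gt1.
  - by rewrite divn_gt0 ?prime_gt0 // dvdn_leq // pdiv_dvd.
  pose l_neq0 := natr_neq0 padicO (prime_gt0 l_prime).
  exists (poly_frob l_prime l_neq0 Pm (size alpha)).
  exists (poly_frob l_prime l_neq0 Qm (size alpha)); rewrite def_n; split.
  - exact: map_poly_frob_expr.
  - by rewrite size_ab; apply: map_poly_frob_expr.
  - by move=> i; rewrite natrM mulrC; apply: in_cm_poly_frob.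
exists P, Q; split; [ | | by move=> i; exists (P`_i - Q`_i); rewrite ?mul1r].
- by rewrite defP; apply: eq_bigr => a _; rewrite expr1.
- by rewrite defQ; apply: eq_bigr => b _; rewrite expr1.
Qed.

End PowerPolynomials.

Lemma symf_evalX (R : comNzRingType) m (i : 'I_m) (P : {poly R}) :
  symf_eval 'X_i P = esym_poly P i.+1.
Proof. by rewrite /symf_eval mmapX mmap1U. Qed.

Section Roots.
Variables (R : comNzRingType) (L : comNzRingType) (iota : {rmorphism R -> L}).
Hypothesis iota_inj : injective iota.

Lemma size_poly_roots (P : {poly R}) (s : seq L) :
  map_poly iota P = \prod_(a <- s) ('X - a%:P) -> size P = (size s).+1.
Proof.
by move=> defP; rewrite -(size_map_inj_poly iota_inj (rmorph0 _)) defP size_prod_XsubC.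
Qed.

Lemma esym_poly1_roots (P : {poly R}) (s : seq L) :
  map_poly iota P = \prod_(a <- s) ('X - a%:P) ->
  iota (esym_poly P 1) = \sum_(a <- s) a.
Proof.
move=> defP; rewrite /esym_poly (size_poly_roots defP) /=.
case: s defP => [|a s] defP; first by rewrite big_nil rmorph0.
rewrite rmorphM rmorph_sign subn1 -coef_map defP.
by rewrite coefPn_prod_XsubC // mulN1r opprK.
Qed.

End Roots.

Section PowerSums.
Variables (p : nat) (OK : idomainType) (pi : OK).
Hypothesis p_prime : prime p.
Hypothesis padicO : is_padic_int_ring p pi.
Hypothesis dpO : dp_ideal p pi.
Variables (P Q : {poly OK}) (L : fieldType) (iota : {rmorphism OK -> L}).
Variables (alpha beta : seq L) (n : nat).
Hypotheses (mP : P \is monic) (mQ : Q \is monic).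
Hypothesis mPQ : forall i, in_m pi (P`_i - Q`_i).
Hypothesis iota_inj : injective iota.
Hypothesis defP : map_poly iota P = \prod_(a <- alpha) ('X - a%:P).
Hypothesis defQ : map_poly iota Q = \prod_(b <- beta) ('X - b%:P).
Hypothesis n_gt0 : (0 < n)%N.

Let prod_powers (s : seq L) : \prod_(a <- s) ('X - (a ^+ n)%:P)
  = \prod_(a <- map (fun a => a ^+ n) s) ('X - a%:P).
Proof. by rewrite big_map. Qed.

Lemma size_roots_eq : size alpha = size beta.
Proof.
have := size_monic_in_m padicO mP mQ mPQ.
by rewrite (size_poly_roots iota_inj defP) (size_poly_roots iota_inj defQ) => -[].
Qed.

Lemma exists_power_polys : exists Pn Qn : {poly OK},
  map_poly iota Pn = \prod_(a <- alpha) ('X - (a ^+ n)%:P) /\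
  map_poly iota Qn = \prod_(b <- beta) ('X - (b ^+ n)%:P).
Proof.
have [Pn [Qn [defPn defQn _]]] :=
  exists_power_polys_in_cm p_prime padicO dpO size_roots_eq defP defQ mPQ n_gt0.
by exists Pn, Qn.
Qed.

Lemma in_cm_power_polys Pn Qn :
  map_poly iota Pn = \prod_(a <- alpha) ('X - (a ^+ n)%:P) ->
  map_poly iota Qn = \prod_(b <- beta) ('X - (b ^+ n)%:P) ->
  size Pn = size Qn /\ forall i, in_cm pi n%:R (Pn`_i - Qn`_i).
Proof.
move=> defPn defQn; have [Pn' [Qn' [defPn' defQn' cPQn']]] :=
  exists_power_polys_in_cm p_prime padicO dpO size_roots_eq defP defQ mPQ n_gt0.
have inj_map := map_inj_poly iota_inj (rmorph0 _).
have -> : Pn = Pn' by apply: inj_map; rewrite defPn defPn'.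
have -> : Qn = Qn' by apply: inj_map; rewrite defQn defQn'.
split=> //; rewrite prod_powers in defPn'; rewrite prod_powers in defQn'.
rewrite (size_poly_roots iota_inj defPn') (size_poly_roots iota_inj defQn').
by rewrite !size_map size_roots_eq.
Qed.

Lemma in_nm_symf_eval_power (Pn Qn : {poly OK}) :
  map_poly iota Pn = \prod_(a <- alpha) ('X - (a ^+ n)%:P) ->
  map_poly iota Qn = \prod_(b <- beta) ('X - (b ^+ n)%:P) ->
  forall (k : nat) (f : {mpoly int[k]}),
    in_nm pi n (symf_eval f Pn - symf_eval f Qn).
Proof.
move=> defPn defQn k f; have [size_PQn cPQn] := in_cm_power_polys defPn defQn.
exact: in_cm_symf_eval size_PQn cPQn.
Qed.

Lemma in_nm_power_sum (pnP pnQ : OK) :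
  iota pnP = \sum_(a <- alpha) a ^+ n -> iota pnQ = \sum_(b <- beta) b ^+ n ->
  in_nm pi n (pnP - pnQ).
Proof.
move=> defpP defpQ; have [Pn [Qn [defPn defQn]]] := exists_power_polys.
have -> : pnP = symf_eval ('X_0 : {mpoly int[1]}) Pn.
  rewrite symf_evalX; apply: (iota_inj); rewrite defpP.
  by rewrite (esym_poly1_roots iota_inj (etrans defPn (prod_powers _))) big_map.
have -> : pnQ = symf_eval ('X_0 : {mpoly int[1]}) Qn.
  rewrite symf_evalX; apply: (iota_inj); rewrite defpQ.
  by rewrite (esym_poly1_roots iota_inj (etrans defQn (prod_powers _))) big_map.
exact: in_nm_symf_eval_power.
Qed.

End PowerSums.

Theorem proposition6p5 (p : nat) (OK : idomainType) (pi : OK) :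
  prime p -> is_padic_int_ring p pi -> dp_ideal p pi ->
  forall P Q : {poly OK}, P \is monic -> Q \is monic ->
  (forall i : nat, in_m pi (P`_i - Q`_i)) ->
  forall (L : fieldType) (iota : {rmorphism OK -> L}), injective iota ->
  forall alpha beta : seq L,
  map_poly iota P = \prod_(a <- alpha) ('X - a%:P) ->
  map_poly iota Q = \prod_(b <- beta) ('X - b%:P) ->
  forall n : nat, (0 < n)%N ->
  (forall Pn Qn : {poly OK},
     map_poly iota Pn = \prod_(a <- alpha) ('X - (a ^+ n)%:P) ->
     map_poly iota Qn = \prod_(b <- beta) ('X - (b ^+ n)%:P) ->
     forall (k : nat) (f : {mpoly int[k]}),
       in_nm pi n (symf_eval f Pn - symf_eval f Qn))
  /\
  (forall pnP pnQ : OK,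
     iota pnP = \sum_(a <- alpha) a ^+ n ->
     iota pnQ = \sum_(b <- beta) b ^+ n ->
     in_nm pi n (pnP - pnQ)).
Proof.
move=> p_prime padicO dpO P Q mP mQ mPQ L iota iota_inj alpha beta defP defQ.
move=> n n_gt0; split=> [Pn Qn defPn defQn k f | pnP pnQ defpP defpQ].
  exact: (in_nm_symf_eval_power p_prime padicO dpO mP mQ mPQ iota_inj
            defP defQ n_gt0 defPn defQn f).
exact: (in_nm_power_sum p_prime padicO dpO mP mQ mPQ iota_inj
          defP defQ n_gt0 defpP defpQ).
Qed.
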